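(* Let $f\in C^1$ and suppose $f'$ is Lipschitz continuous on the interval between $u_L$ and $u_R$ (i.e. on $[\min\{u_L,u_R\},\max\{u_L,u_R\}]$). Then the Riemann problem $U_t+f(U)_x=0$ for $x\in\mathbb{R}$, $t>0$, with $U(x,0)=u_L$ for $x<0$ and $U(x,0)=u_R$ for $x>0$, has at most one self-similar solution $U(x,t)=u^*(x/t)$ satisfying the viscous wave fan profile criterion.
   Context: Viscous wave fan profile criterion: a self-similar Riemann solution $U(x,t)=u^*(\xi)$, $\xi=x/t$, satisfies it iff there exist solutions $u_\varepsilon\in C^2(\mathbb{R})$ of the Dafermos ODE problem $\varepsilon u_{\xi\xi}=(f'(u)-\xi)u_\xi$ on $\mathbb{R}$, $u(-\infty)=u_L$, $u(+\infty)=u_R$, such that $u_\varepsilon\to u^*$ in $L^1_{loc}(\mathbb{R})$ as $\varepsilon\to 0$. The corollary follows from the paper's Theorem 1.1: under the stated Lipschitz hypothesis, for every $\varepsilon>0$ this ODE problem has exactly one solution. *)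

From HB Require Import structures.
From mathcomp Require Import all_boot all_order all_algebra.
From mathcomp Require Import all_classical all_reals all_analysis.
Set Implicit Arguments. Unset Strict Implicit. Unset Printing Implicit Defensive.
Import Order.TTheory GRing.Theory Num.Theory.
Import numFieldNormedType.Exports.
Local Open Scope classical_set_scope.
Local Open Scope ring_scope.

Section Defs.
Variable R : realType.

Definition C1 (f : R -> R) : Prop :=
  (forall x, derivable f x 1) /\ continuous (derive1 f).

Definition C2 (u : R -> R) : Prop :=
  (forall x, derivable u x 1) /\ (forall x, derivable (derive1 u) x 1) /\
  continuous (derive1 (derive1 u)).

Definition deriv_lipschitz_between (f : R -> R) (uL uR : R) : Prop :=
  exists L : R, forall x y,
    x \in `[Num.min uL uR, Num.max uL uR] ->
    y \in `[Num.min uL uR, Num.max uL uR] ->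
    `|derive1 f x - derive1 f y| <= L * `|x - y|.

Definition dafermos_solution (f : R -> R) (uL uR eps : R) (u : R -> R) : Prop :=
  [/\ C2 u,
      (forall xi, eps * (derive1 (derive1 u)) xi = (derive1 f (u xi) - xi) * (derive1 u) xi),
      u x @[x --> -oo] --> uL &
      u x @[x --> +oo] --> uR].

(* Viscous wave fan profile criterion for the self-similar profile ustar:
   there are solutions u_eps (eps > 0) of the Dafermos problem with
   u_eps --> ustar in L^1_loc(R) as eps --> 0+. *)
Definition viscous_wave_fan_profile (f : R -> R) (uL uR : R) (ustar : R -> R)
  : Prop :=
  measurable_fun setT ustar /\
  exists u : R -> R -> R,
    (forall eps, 0 < eps -> dafermos_solution f uL uR eps (u eps)) /\
    (forall a b : R,
       (fun eps => (\int[lebesgue_measure]_(x in `[a, b]) (`|u eps x - ustar x|)%:E)%E)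
         @ 0^'+ --> 0%E).

End Defs.

(* Fix eps > 0 and write F = f'. The derivative of a solution of
   eps u'' = (F(u) - x) u' solves a linear first-order equation, so it either
   vanishes identically or never; by the symmetry u -> -u it suffices to compare
   two increasing solutions u1, u2. With tau = u2^-1 o u1, P = u1' - u2' o tau
   and D = id - tau one finds
     (P D)' = - P^2 / u2'(tau) - D^2 u1' / eps <= 0   and   eps (P^2)' = -2 u1' P D,
   and P -> 0 at both ends. If P D < 0 at some point then P^2 is nondecreasing
   to its right and tends to 0, so P = 0 there; symmetrically P D > 0 is
   impossible. Hence P D = 0, its derivative vanishes, D = 0 and u1 = u2.
   So both profiles are L^1_loc limits of the same family, and coincide a.e. *)
From HB Require Import structures.
From mathcomp Require Import all_boot all_order all_algebra.
From mathcomp Require Import all_classical all_reals all_analysis.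
From mathcomp Require Import ring lra measurable_realfun.
Set Implicit Arguments. Unset Strict Implicit. Unset Printing Implicit Defensive.
Import Order.TTheory GRing.Theory Num.Theory.
Import numFieldNormedType.Exports.
Local Open Scope classical_set_scope.
Local Open Scope ring_scope.

Section real_functions.
Variable R : realType.
Implicit Types (g dg : R -> R) (x y k lo : R).

Lemma is_derive_continuous g x dgx : is_derive x (1 : R) g dgx -> {for x, continuous g}.
Proof. by case=> dx _; apply/differentiable_continuous/derivable1_diffP. Qed.

Lemma is_derive_increment_lb g dg x y k : x <= y ->
  (forall z, x <= z <= y -> is_derive z (1 : R) g (dg z)) ->
  (forall z, x <= z <= y -> k <= dg z) -> k * (y - x) <= g y - g x.
Proof.
move=> xy gd kdg.
have [|c cxy ->] := MVT_segment xy (fun z zxy => gd z (subset_itv_oo_cc zxy)).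
  apply: continuous_in_subspaceT => z; rewrite inE /= in_itv /= => zxy.
  exact: is_derive_continuous (gd z zxy).
by rewrite ler_wpM2r ?subr_ge0 // kdg // -in_itv.
Qed.

Lemma is_derive_increment_ub g dg x y k : x <= y ->
  (forall z, x <= z <= y -> is_derive z (1 : R) g (dg z)) ->
  (forall z, x <= z <= y -> dg z <= k) -> g y - g x <= k * (y - x).
Proof.
move=> xy gd dgk.
have := @is_derive_increment_lb (- g) (- dg) x y (- k) xy.
rewrite !fctE mulNr => H; suff : - (k * (y - x)) <= - g y - - g x by lra.
by apply: H => z xzy; [exact: is_deriveN (gd z xzy) | rewrite lerN2 dgk].
Qed.

Lemma is_derive_gt0_homo g dg : (forall x, is_derive x (1 : R) g (dg x)) ->
  (forall x, 0 < dg x) -> {homo g : x y / x < y}.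
Proof.
move=> gd dg_gt0 x y xy.
have [|c _ E] := MVT xy (fun z _ => gd z).
  by apply: continuous_subspaceT => z; exact: is_derive_continuous (gd z).
by rewrite -subr_gt0 E mulr_gt0 // subr_gt0.
Qed.

Lemma is_derive_0_is_cst_gt g lo x y :
  (forall z, lo < z -> is_derive z (1 : R) g 0) -> lo < x -> lo < y -> g x = g y.
Proof.
move=> gd; wlog xy : x y / x <= y.
  by move=> H lox loy; case: (leP x y) => [|/ltW] /H ->.
move=> lox _; have gd_xy z : x <= z <= y -> is_derive z (1 : R) g ((fun => 0) z).
  by case/andP=> xz _; apply: gd; exact: lt_le_trans xz.
have := is_derive_increment_lb xy gd_xy (fun z _ => lexx (0 : R)).
have := is_derive_increment_ub xy gd_xy (fun z _ => lexx (0 : R)).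
rewrite mul0r; lra.
Qed.

Lemma continuous_sign_change_root g x y : continuous g -> g x <= 0 <= g y ->
  exists c, g c = 0.
Proof.
move=> gc /andP[gx gy]; have gcT a b : {within `[a, b], continuous g}.
  exact: continuous_subspaceT.
case: (leP x y) => [xy|/ltW yx].
- have [|c _ gc0] := @IVT _ g x y 0 xy (gcT x y); last by exists c.
  by rewrite ge_min gx le_max gy orbT.
- have [|c _ gc0] := @IVT _ g y x 0 yx (gcT y x); last by exists c.
  by rewrite ge_min gx orbT le_max gy.
Qed.

Lemma continuous_neq0_sign g : continuous g -> (forall x, g x != 0) ->
  (forall x, 0 < g x) \/ (forall x, g x < 0).
Proof.
move=> gc gN0; have [|/existsNP[x /negP]] := pselect (forall x, 0 < g x).
  by left.
rewrite -leNgt => gx; right => y; rewrite ltNge; apply/negP => gy.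
have [c /eqP] := continuous_sign_change_root gc (introT andP (conj gx gy)).
by rewrite (negbTE (gN0 c)).
Qed.

Lemma continuous_cvg_surj g (l r v : R) : continuous g ->
  g x @[x --> -oo] --> l -> g x @[x --> +oo] --> r -> l < v < r ->
  exists t, g t = v.
Proof.
move=> gc gl gr /andP[lv vr].
have [x [_ gx]] : \forall x \near -oo, g x < v by exact: cvgr_lt _ gl _ lv.
have [y [_ gy]] : \forall y \near +oo, v < g y by exact: cvgr_gt _ gr _ vr.
have gvc : continuous (g \- cst v).
  by move=> z; apply: cvgB; [exact: gc | exact: cvg_cst].
have /(continuous_sign_change_root gvc)[c /eqP] :
    (g \- cst v) (x - 1) <= 0 <= (g \- cst v) (y + 1).
  by rewrite /= subr_le0 subr_ge0 !ltW ?gx ?gy //; lra.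
by rewrite subr_eq0 => /eqP gcv; exists c.
Qed.

Lemma homo_lt_between_cvg g (l r : R) : {homo g : x y / x < y} ->
  g x @[x --> -oo] --> l -> g x @[x --> +oo] --> r -> forall x, l < g x < r.
Proof.
move=> g_lt gl gr x; apply/andP; split.
- apply: (@le_lt_trans _ _ (g (x - 1))); last by apply: g_lt; lra.
  apply: (cvgr_to_le gl); near=> t; apply/ltW/g_lt.
  by near: t; apply: nbhs_ninfty_lt; exact: num_real.
- apply: (@lt_le_trans _ _ (g (x + 1))); first by apply: g_lt; lra.
  apply: (cvgr_to_ge gr); near=> t; apply/ltW/g_lt.
  by near: t; apply: nbhs_pinfty_gt; exact: num_real.
Unshelve. all: by end_near. Qed.

Lemma is_derive_ge0_le_cvgy g dg x (l : R) :
  (forall z, is_derive z (1 : R) g (dg z)) -> (forall z, x <= z -> 0 <= dg z) ->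
  g z @[z --> +oo] --> l -> g x <= l.
Proof.
move=> gd dg_ge0 gl; apply: (cvgr_to_ge gl); near=> y.
have xy : x <= y by near: y; apply: nbhs_pinfty_ge; exact: num_real.
have := @is_derive_increment_lb g dg x y 0 xy (fun z _ => gd z).
rewrite mul0r subr_ge0; apply=> z /andP[xz _]; exact: dg_ge0.
Unshelve. all: by end_near. Qed.

Lemma is_derive_le0_le_cvgNy g dg x (l : R) :
  (forall z, is_derive z (1 : R) g (dg z)) -> (forall z, z <= x -> dg z <= 0) ->
  g z @[z --> -oo] --> l -> g x <= l.
Proof.
move=> gd dg_le0 gl; apply: (cvgr_to_ge gl); near=> y.
have yx : y <= x by near: y; apply: nbhs_ninfty_le; exact: num_real.
have := @is_derive_increment_ub g dg y x 0 yx (fun z _ => gd z).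
rewrite mul0r subr_le0; apply=> z /andP[_ zx]; exact: dg_le0.
Unshelve. all: by end_near. Qed.

Lemma bounded_deriv_nonincreasing_cvgy0 g dg m (lb ub : R) :
  (forall x, is_derive x (1 : R) g (dg x)) -> (forall x, 0 <= dg x) ->
  (forall x y, m <= x <= y -> dg y <= dg x) -> (forall x, lb <= g x <= ub) ->
  dg x @[x --> +oo] --> 0.
Proof.
move=> gd dg_ge0 dg_nincr g_bd; apply/cvgrPdist_lt => e e_gt0; near=> t.
rewrite sub0r normrN ger0_norm // ltNge; apply/negP => e_le_dgt.
have t_far : m + (ub - lb) / e < t.
  by near: t; apply: nbhs_pinfty_gt; exact: num_real.
have lb_ub : 0 <= (ub - lb) / e.
  by rewrite divr_ge0 ?(ltW e_gt0) // subr_ge0; case/andP: (g_bd 0); exact: le_trans.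
have mt : m <= t by lra.
have growth : e * (t - m) <= g t - g m.
  apply: (is_derive_increment_lb mt (fun z _ => gd z)) => z /andP[mz zt].
  by apply: le_trans e_le_dgt (dg_nincr _ _ _); rewrite mz zt.
have : ub - lb < (t - m) * e by rewrite -ltr_pdivrMr //; lra.
by have := g_bd t; have := g_bd m; lra.
Unshelve. all: by end_near. Qed.

Lemma linear_ode_eq0 (b y : R -> R) x0 x : continuous b ->
  (forall t, is_derive t (1 : R) y (b t * y t)) -> y x0 = 0 -> y x = 0.
Proof.
move=> bc yd yx0; pose lo := Num.min x x0 - 1.
pose B t := (\int[lebesgue_measure]_(s in `[lo, t]) b s)%R.
have Bd t : lo < t -> is_derive t (1 : R) B (b t).
  move=> lot; have [] := @continuous_FTC1_closed R b lo t (t + 1) _ _ lot (bc t).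
  - by rewrite ltrDl.
  - apply: continuous_compact_integrable; first exact: segment_compact.
    exact: continuous_subspaceT.
  by move=> dB dBt; apply: is_derive_eq (derivableP dB) _; rewrite -derive1E.
pose z t := y t * expR (- B t).
have zd t : lo < t -> is_derive t (1 : R) z 0.
  move=> lot; have expBd := @is_derive1_comp _ expR (- B) t _ _
    (is_derive_expR _) (is_deriveN (Bd t lot)).
  apply: is_derive_eq (is_deriveM (yd t) expBd) _.
  by rewrite /GRing.scale /=; ring.
have lox : lo < x by rewrite /lo; have := ge_min x x x0; rewrite lexx /=; lra.
have lox0 : lo < x0 by rewrite /lo; have := ge_min x0 x x0; rewrite lexx orbT; lra.
have := is_derive_0_is_cst_gt zd lox lox0.
rewrite /z yx0 mul0r => /eqP.
by rewrite mulf_eq0 (gt_eqF (expR_gt0 _)) orbF => /eqP.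
Qed.

End real_functions.

Section dafermos_ode.
Variable R : realType.
Implicit Types (F u d a : R -> R) (eps uL uR : R).

Record dafermos_ode F eps u d a : Prop := DafermosOde {
  ode_du : forall x, is_derive x (1 : R) u (d x);
  ode_dd : forall x, is_derive x (1 : R) d (a x);
  ode_eq : forall x, eps * a x = (F (u x) - x) * d x }.

Lemma dafermos_odeN F eps u d a : dafermos_ode F eps u d a ->
  dafermos_ode (F \o -%R) eps (- u) (- d) (- a).
Proof.
case=> du dd ode; split=> x; rewrite ?fctE.
- exact: is_deriveN.
- exact: is_deriveN.
- by rewrite opprK mulrN ode mulrN.
Qed.

Lemma dafermos_ode_reflect F eps u d a : dafermos_ode F eps u d a ->
  dafermos_ode (fun v => - F (- v)) eps (fun x => - u (- x)) (fun x => d (- x))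
    (fun x => - a (- x)).
Proof.
case=> du dd ode; have deriv_reflect (g : R -> R) (dg x : R) :
    is_derive (- x) (1 : R) g dg -> is_derive x (1 : R) (fun t => g (- t)) (- dg).
  by move=> gd; rewrite -mulrN1; exact: is_derive1_comp gd (is_deriveNid x 1).
split=> x.
- by rewrite -[d _]opprK; apply: (is_deriveN (f := fun t => u (- t))); exact: deriv_reflect.
- exact: deriv_reflect.
- by rewrite opprK mulrN ode -opprD mulNr opprK.
Qed.

Lemma dafermos_ddE F eps u d a x : eps != 0 -> dafermos_ode F eps u d a ->
  a x = (F (u x) - x) / eps * d x.
Proof. by move=> eps_neq0 ode; rewrite mulrAC -(ode_eq ode) mulrC mulKf. Qed.

Section dafermos_profile.
Variables (F : R -> R) (eps uL uR : R) (u d a : R -> R).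
Hypotheses (eps_gt0 : 0 < eps) (F_cont : continuous F).
Hypothesis ode : dafermos_ode F eps u d a.
Hypotheses (u_cvgNy : u x @[x --> -oo] --> uL) (u_cvgy : u x @[x --> +oo] --> uR).

Lemma dafermos_deriv_eq0 x0 x : d x0 = 0 -> d x = 0.
Proof.
apply: (@linear_ode_eq0 _ (fun t => (F (u t) - t) / eps)).
  move=> t; apply: cvgM; last exact: cvg_cst.
  apply: cvgB; last exact: cvg_id.
  exact/continuous_comp/F_cont/(is_derive_continuous (ode_du ode t)).
move=> t; apply: is_derive_eq (ode_dd ode t) _.
by rewrite (dafermos_ddE _ (lt0r_neq0 eps_gt0) ode).
Qed.

Lemma dafermos_trichotomy :
  [\/ uL = uR /\ (forall x, u x = uL),
      uL < uR /\ (forall x, 0 < d x) |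
      uR < uL /\ (forall x, d x < 0)].
Proof.
have [[x0 dx0]|d_neq0] := pselect (exists x0, d x0 = 0).
  have u_cst x : u x = u 0.
    apply: is_derive_0_is_cst => t; rewrite -(dafermos_deriv_eq0 t dx0).
    exact: ode_du ode t.
  have u_lim l (G : set_system R) : ProperFilter G -> u x @[x --> G] --> l -> l = u 0.
    move=> G0 /(cvg_lim (@Rhausdorff R)) <-.
    by rewrite (funext u_cst) lim_cst //; exact: Rhausdorff.
  rewrite (u_lim _ _ _ u_cvgNy) (u_lim _ _ _ u_cvgy).
  by apply: Or31; split.
have dc : continuous d := fun x => is_derive_continuous (ode_dd ode x).
have d_neq0' x : d x != 0 by apply/eqP => dx; apply: d_neq0; exists x.
have [d_gt0|d_lt0] := continuous_neq0_sign dc d_neq0'.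
  apply: Or32; split=> //.
  have /andP[] := homo_lt_between_cvg (is_derive_gt0_homo (ode_du ode) d_gt0) u_cvgNy u_cvgy 0.
  exact: lt_trans.
apply: Or33; split=> //.
have dN_gt0 x : 0 < (- d) x by rewrite fctE oppr_gt0.
have uN_homo := is_derive_gt0_homo (ode_du (dafermos_odeN ode)) dN_gt0.
have uN_cvgNy : (- u) x @[x --> -oo] --> - uL by exact: cvgN.
have uN_cvgy : (- u) x @[x --> +oo] --> - uR by exact: cvgN.
have /andP[] := homo_lt_between_cvg uN_homo uN_cvgNy uN_cvgy 0.
by move=> h1 h2; rewrite -ltrN2; exact: lt_trans h1 h2.
Qed.

Lemma dafermos_deriv_cvgy : (forall x, 0 < d x) -> d x @[x --> +oo] --> 0.
Proof.
move=> d_gt0; have [ud dd ode_x] := ode.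
have u_bd := homo_lt_between_cvg (is_derive_gt0_homo ud d_gt0) u_cvgNy u_cvgy.
have [m [_ Fu_lt]] : \forall x \near +oo, F (u x) < x.
  have Fu_cvg : (F \o u) x @[x --> +oo] --> F uR := cvg_comp _ _ u_cvgy (@F_cont uR).
  near=> x; apply: (@lt_trans _ _ (F uR + 1)).
    by near: x; apply: cvgr_lt _ Fu_cvg _ _; rewrite ltrDl.
  by near: x; apply: nbhs_pinfty_gt; exact: num_real.
apply: (@bounded_deriv_nonincreasing_cvgy0 _ u d (m + 1) uL uR ud).
- by move=> x; exact: ltW.
- move=> x y /andP[mx xy]; rewrite -subr_le0.
  have := is_derive_increment_ub xy (fun z _ => dd z) (k := 0).
  rewrite mul0r; apply=> z /andP[xz _].
  have mz : m < z by lra.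
  by rewrite -(pmulr_rle0 _ eps_gt0) ode_x nmulr_rle0 ?subr_lt0 ?Fu_lt ?ltW.
- by move=> x; case/andP: (u_bd x) => /ltW -> /ltW ->.
Unshelve. all: by end_near. Qed.

End dafermos_profile.

Lemma dafermos_deriv_cvgNy F eps uL uR u d a : 0 < eps -> continuous F ->
  dafermos_ode F eps u d a -> u x @[x --> -oo] --> uL -> u x @[x --> +oo] --> uR ->
  (forall x, 0 < d x) -> d x @[x --> -oo] --> 0.
Proof.
move=> eps_gt0 F_cont ode u_cvgNy u_cvgy d_gt0; apply/cvgNy_compNP.
apply: (dafermos_deriv_cvgy (uL := - uR) (uR := - uL) eps_gt0 _
  (dafermos_ode_reflect ode)) => [v||| x].
- by apply: continuousN; apply: continuous_comp; [exact: continuousN | exact: F_cont].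
- by apply: cvgN; exact: (cvgy_compNP u _).1 u_cvgy.
- by apply: cvgN; exact: (cvgNy_compNP u _).1 u_cvgNy.
- exact: d_gt0.
Qed.

End dafermos_ode.

Section increasing_profiles.
Variable R : realType.
Variables (F : R -> R) (eps uL uR : R) (u1 d1 a1 u2 d2 a2 : R -> R).
Hypotheses (eps_gt0 : 0 < eps) (F_cont : continuous F).
Hypotheses (ode1 : dafermos_ode F eps u1 d1 a1) (ode2 : dafermos_ode F eps u2 d2 a2).
Hypotheses (d1_gt0 : forall x, 0 < d1 x) (d2_gt0 : forall x, 0 < d2 x).
Hypotheses (u1_cvgNy : u1 x @[x --> -oo] --> uL) (u1_cvgy : u1 x @[x --> +oo] --> uR).
Hypotheses (u2_cvgNy : u2 x @[x --> -oo] --> uL) (u2_cvgy : u2 x @[x --> +oo] --> uR).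

Let u2_mono : {mono u2 : x y / x <= y}.
Proof. exact/le_mono/(is_derive_gt0_homo (ode_du ode2) d2_gt0). Qed.

Let u2_inv (v : R) : R := xget 0 [set t | u2 t = v].

Let u2K : cancel u2 u2_inv.
Proof.
move=> t; apply: (inc_inj u2_mono).
by apply: (@xgetPex _ 0 [set s | u2 s = u2 t]); exists t.
Qed.

Let tau x := u2_inv (u1 x).

Let tauE x : u2 (tau x) = u1 x.
Proof.
have u1_homo := is_derive_gt0_homo (ode_du ode1) d1_gt0.
have u2_cont z : {for z, continuous u2} := is_derive_continuous (ode_du ode2 z).
rewrite /tau; have [t <-] := continuous_cvg_surj u2_cont u2_cvgNy u2_cvgy
  (homo_lt_between_cvg u1_homo u1_cvgNy u1_cvgy x).
by rewrite u2K.
Qed.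

Let tau_deriv x : is_derive x (1 : R) tau (d1 x / d2 (tau x)).
Proof.
have u2_invd : is_derive (u1 x) (1 : R) u2_inv (d2 (tau x))^-1.
  rewrite -tauE; apply: (is_derive_inverse _ _ (ode_du ode2 _) (lt0r_neq0 (d2_gt0 _))).
    by near=> s; exact: u2K.
  by near=> s; exact: is_derive_continuous (ode_du ode2 s).
by rewrite mulrC; exact: is_derive1_comp u2_invd (ode_du ode1 x).
Unshelve. all: by end_near. Qed.

Let tau_cvgy : tau x @[x --> +oo] --> +oo.
Proof.
apply/cvgryPge => A; have /andP[_ u2A_lt] := homo_lt_between_cvg
  (is_derive_gt0_homo (ode_du ode2) d2_gt0) u2_cvgNy u2_cvgy A.
by near=> x; rewrite -u2_mono tauE ltW //; near: x; exact: cvgr_gt _ u1_cvgy _ u2A_lt.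
Unshelve. all: by end_near. Qed.

Let tau_cvgNy : tau x @[x --> -oo] --> -oo.
Proof.
apply/cvgrNyPle => A; have /andP[u2A_gt _] := homo_lt_between_cvg
  (is_derive_gt0_homo (ode_du ode2) d2_gt0) u2_cvgNy u2_cvgy A.
by near=> x; rewrite -u2_mono tauE ltW //; near: x; exact: cvgr_lt _ u1_cvgNy _ u2A_gt.
Unshelve. all: by end_near. Qed.

Let P x := d1 x - d2 (tau x).
Let D x := x - tau x.
Let Q x := P x * D x.

Let P_deriv x : is_derive x (1 : R) P (- (D x * d1 x) / eps).
Proof.
have eps_neq0 := lt0r_neq0 eps_gt0.
have d2tau := is_derive1_comp (ode_dd ode2 (tau x)) (tau_deriv x).
apply: is_derive_eq (is_deriveB (ode_dd ode1 x) d2tau) _.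
rewrite (dafermos_ddE _ eps_neq0 ode1) (dafermos_ddE _ eps_neq0 ode2) tauE /D.
by field; rewrite eps_neq0 lt0r_neq0.
Qed.

Let D_deriv x : is_derive x (1 : R) D (1 - d1 x / d2 (tau x)).
Proof. exact: is_deriveB (is_derive_id x 1) (tau_deriv x). Qed.

Let Q_deriv x :
  is_derive x (1 : R) Q (- (P x ^+ 2 / d2 (tau x)) - D x ^+ 2 * d1 x / eps).
Proof.
apply: is_derive_eq (is_deriveM (P_deriv x) (D_deriv x)) _.
by rewrite /GRing.scale /= /P; field; rewrite !lt0r_neq0.
Qed.

Let P2_deriv x : is_derive x (1 : R) (P * P) (- (2 * d1 x / eps * Q x)).
Proof.
apply: is_derive_eq (is_deriveM (P_deriv x) (P_deriv x)) _.
by rewrite /GRing.scale /= /Q; field; rewrite lt0r_neq0.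
Qed.

Let Q_deriv_terms_ge0 x : 0 <= P x ^+ 2 / d2 (tau x) /\ 0 <= D x ^+ 2 * d1 x / eps.
Proof.
split; apply: divr_ge0.
- exact: sqr_ge0.
- exact/ltW/d2_gt0.
- by rewrite mulr_ge0 ?sqr_ge0 ?ltW.
- exact: ltW.
Qed.

Let Q_nonincreasing x y : x <= y -> Q y <= Q x.
Proof.
move=> xy; rewrite -subr_le0.
have := is_derive_increment_ub (k := 0) xy (fun z _ => Q_deriv z).
rewrite mul0r; apply=> z _; rewrite -opprD oppr_le0.
by have [] := Q_deriv_terms_ge0 z; exact: addr_ge0.
Qed.

Let P2_cvgy : (P * P) x @[x --> +oo] --> 0.
Proof.
have d2_cvgy := dafermos_deriv_cvgy eps_gt0 F_cont ode2 u2_cvgNy u2_cvgy d2_gt0.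
have P_cvgy : P x @[x --> +oo] --> 0.
  rewrite -(subr0 0); apply: cvgB; last exact: cvg_comp tau_cvgy d2_cvgy.
  exact: dafermos_deriv_cvgy eps_gt0 F_cont ode1 u1_cvgNy u1_cvgy d1_gt0.
by rewrite -(mulr0 0); exact: cvgM.
Qed.

Let P2_cvgNy : (P * P) x @[x --> -oo] --> 0.
Proof.
have d2_cvgNy := dafermos_deriv_cvgNy eps_gt0 F_cont ode2 u2_cvgNy u2_cvgy d2_gt0.
have P_cvgNy : P x @[x --> -oo] --> 0.
  rewrite -(subr0 0); apply: cvgB; last exact: cvg_comp tau_cvgNy d2_cvgNy.
  exact: dafermos_deriv_cvgNy eps_gt0 F_cont ode1 u1_cvgNy u1_cvgy d1_gt0.
by rewrite -(mulr0 0); exact: cvgM.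
Qed.

Let Q_eq0 x : Q x = 0.
Proof.
have P_eq0 : (P * P) x <= 0 -> Q x = 0.
  rewrite fctE -expr2 => P2_le0; have /eqP : P x ^+ 2 = 0 by apply/le_anti; rewrite P2_le0 sqr_ge0.
  by rewrite sqrf_eq0 => /eqP; rewrite /Q => ->; rewrite mul0r.
have k_gt0 z : 0 < 2 * d1 z / eps by rewrite divr_gt0 ?mulr_gt0.
case: (ltgtP (Q x) 0) => // Qx; apply: P_eq0.
- apply: (is_derive_ge0_le_cvgy P2_deriv) P2_cvgy => z xz.
  by rewrite oppr_ge0 pmulr_rle0 //; exact: le_trans (Q_nonincreasing xz) (ltW Qx).
- apply: (is_derive_le0_le_cvgNy P2_deriv) P2_cvgNy => z zx.
  by rewrite oppr_le0 pmulr_rge0 //; exact: le_trans (ltW Qx) (Q_nonincreasing zx).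
Qed.

Lemma increasing_profiles_eq x : u1 x = u2 x.
Proof.
have Q_cst : Q = cst 0 by apply/funext => y; exact: Q_eq0.
have := @derive_val _ _ _ _ _ _ _ (Q_deriv x); rewrite Q_cst derive_cst => Q'x.
have [A_ge0 B_ge0] := Q_deriv_terms_ge0 x.
have /eqP : D x ^+ 2 * d1 x / eps = 0 by lra.
rewrite mulf_eq0 invr_eq0 (gt_eqF eps_gt0) orbF mulf_eq0 (gt_eqF (d1_gt0 x)) orbF.
by rewrite sqrf_eq0 subr_eq0 => /eqP x_tau; rewrite -tauE -x_tau.
Qed.

End increasing_profiles.

Section dafermos_unique.
Variable R : realType.

Lemma dafermos_ode_unique (F : R -> R) (eps uL uR : R) (u1 d1 a1 u2 d2 a2 : R -> R) :
  0 < eps -> continuous F ->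
  dafermos_ode F eps u1 d1 a1 -> dafermos_ode F eps u2 d2 a2 ->
  u1 x @[x --> -oo] --> uL -> u1 x @[x --> +oo] --> uR ->
  u2 x @[x --> -oo] --> uL -> u2 x @[x --> +oo] --> uR ->
  u1 =1 u2.
Proof.
move=> eps_gt0 F_cont ode1 ode2 u1_cvgNy u1_cvgy u2_cvgNy u2_cvgy.
have [[uLR u1_cst]|[uLR d1_gt0]|[uLR d1_lt0]] :=
  dafermos_trichotomy eps_gt0 F_cont ode1 u1_cvgNy u1_cvgy;
have [[uLR' u2_cst]|[uLR' d2_gt0]|[uLR' d2_lt0]] :=
  dafermos_trichotomy eps_gt0 F_cont ode2 u2_cvgNy u2_cvgy;
  try by move=> x; lra.
- by move=> x; rewrite u1_cst u2_cst.
- exact: increasing_profiles_eq eps_gt0 F_cont ode1 ode2 d1_gt0 d2_gt0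
    u1_cvgNy u1_cvgy u2_cvgNy u2_cvgy.
- have FN_cont : continuous (F \o -%R).
    by move=> v; apply: continuous_comp; [exact: continuousN | exact: F_cont].
  have dN_gt0 (d : R -> R) : (forall x, d x < 0) -> forall x, 0 < (- d) x.
    by move=> d_lt0 x; rewrite fctE oppr_gt0.
  move=> x; apply: oppr_inj.
  exact: (increasing_profiles_eq eps_gt0 FN_cont
    (dafermos_odeN ode1) (dafermos_odeN ode2) (dN_gt0 _ d1_lt0) (dN_gt0 _ d2_lt0)
    (cvgN u1_cvgNy) (cvgN u1_cvgy) (cvgN u2_cvgNy) (cvgN u2_cvgy)).
Qed.

Lemma dafermos_solution_ode (f : R -> R) (uL uR eps : R) (u : R -> R) :
  dafermos_solution f uL uR eps u ->
  dafermos_ode (derive1 f) eps u (derive1 u) (derive1 (derive1 u)).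
Proof.
case=> [[du [dd _]] ode _ _]; split=> // x; rewrite derive1E; exact: derivableP.
Qed.

Lemma dafermos_solution_unique (f : R -> R) (uL uR eps : R) (u1 u2 : R -> R) :
  C1 f -> 0 < eps ->
  dafermos_solution f uL uR eps u1 -> dafermos_solution f uL uR eps u2 -> u1 = u2.
Proof.
move=> [_ f'_cont] eps_gt0 sol1 sol2; apply/funext.
have [_ _ u1_cvgNy u1_cvgy] := sol1; have [_ _ u2_cvgNy u2_cvgy] := sol2.
exact: dafermos_ode_unique eps_gt0 f'_cont (dafermos_solution_ode sol1)
  (dafermos_solution_ode sol2) u1_cvgNy u1_cvgy u2_cvgNy u2_cvgy.
Qed.

End dafermos_unique.

Section L1_loc.
Variable R : realType.
Local Notation mu := (@lebesgue_measure R).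

Lemma L1_itv_limit_unique (I : Type) (G : set_system I) {FG : ProperFilter G}
    (v : I -> R -> R) (u1 u2 : R -> R) (a b : R) :
  measurable_fun setT u1 -> measurable_fun setT u2 ->
  (\forall i \near G, measurable_fun setT (v i)) ->
  (fun i => \int[mu]_(x in `[a, b]) (`|v i x - u1 x|)%:E)%E @ G --> 0%E ->
  (fun i => \int[mu]_(x in `[a, b]) (`|v i x - u2 x|)%:E)%E @ G --> 0%E ->
  (\int[mu]_(x in `[a, b]) (`|u1 x - u2 x|)%:E = 0)%E.
Proof.
move=> mu1 mu2 mv v_u1 v_u2.
have mab : measurable [set` `[a, b]] by exact: measurable_itv.
have mabs (g h : R -> R) : measurable_fun setT g -> measurable_fun setT h ->
    measurable_fun [set` `[a, b]] (fun x => (`|g x - h x|%:E : \bar R)).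
  move=> mg mh; apply/measurable_EFinP/measurableT_comp => //.
  by apply: measurable_funB; exact: measurable_funS mg || exact: measurable_funS mh.
have abs_ge0 (g h : R -> R) x : [set` `[a, b]] x -> (0 <= (`|g x - h x|)%:E)%E.
  by rewrite lee_fin.
apply/le_anti; rewrite integral_ge0 ?andbT; last exact: abs_ge0.
rewrite -[0%E]adde0; apply: cvge_to_ge (cvgeD _ v_u1 v_u2) _ => //.
apply: filterS mv => i mvi.
have := ge0_integralD mu mab (abs_ge0 _ _) (mabs _ _ mvi mu1) (abs_ge0 _ _) (mabs _ _ mvi mu2).
move=> /= <-.
apply: ge0_le_integral; [exact: mab | exact: abs_ge0 | exact: mabs | | ].
  by apply: emeasurable_funD; exact: mabs.
move=> x _; rewrite -EFinD lee_fin.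
have -> : u1 x - u2 x = (v i x - u2 x) - (v i x - u1 x) by ring.
by rewrite [leRHS]addrC ler_normB.
Qed.

Lemma ae_eq_of_integral_itv_abs_eq0 (u1 u2 : R -> R) :
  measurable_fun setT u1 -> measurable_fun setT u2 ->
  (forall a b : R, \int[mu]_(x in `[a, b]) (`|u1 x - u2 x|)%:E = 0)%E ->
  {ae mu, forall x, u1 x = u2 x}.
Proof.
move=> mu1 mu2 int_eq0; pose In (n : nat) := [set` `[- (n%:R : R), n%:R]].
have ae_In n : \forall x \ae mu, In n x -> (u1 x - u2 x)%:E = cst 0%E x.
  have mIn : measurable (In n) by exact: measurable_itv.
  apply: (ae_eq_integral_abs mu mIn _).1.
    by apply/measurable_EFinP/measurable_funB; exact: measurable_funS (subsetT _) _.
  by rewrite -(int_eq0 (- n%:R) n%:R); apply: eq_integral => x _; rewrite abse_EFin.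
apply: filterS (ae_foralln ae_In) => x u12_In.
have x_In : In (Num.Def.trunc `|x|).+1 x.
  by rewrite /In /= in_itv /= -ler_norml ltW // truncnS_gt.
by have /eqP := u12_In _ x_In; rewrite eqe subr_eq0 => /eqP.
Qed.

End L1_loc.

Theorem corollary1p2 (R : realType) (f : R -> R) (uL uR : R) :
  C1 f -> deriv_lipschitz_between f uL uR ->
  forall u1 u2 : R -> R,
    viscous_wave_fan_profile f uL uR u1 ->
    viscous_wave_fan_profile f uL uR u2 ->
    {ae (@lebesgue_measure R), forall x, u1 x = u2 x}.
Proof.
move=> f_C1 _ u1 u2 [mu1 [v1 [v1_sol v1_u1]]] [mu2 [v2 [v2_sol v2_u2]]].
have v12 : \forall e \near 0^'+, v1 e = v2 e.
  near=> e; have e_gt0 : 0 < e by near: e; exact: nbhs_right_gt.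
  exact: dafermos_solution_unique f_C1 e_gt0 (v1_sol e e_gt0) (v2_sol e e_gt0).
have v1_meas : \forall e \near 0^'+, measurable_fun setT (v1 e).
  near=> e; have [[v1_deriv _] _ _ _] : dafermos_solution f uL uR e (v1 e).
    by apply: v1_sol; near: e; exact: nbhs_right_gt.
  apply: continuous_measurable_fun => x.
  exact: is_derive_continuous (derivableP (v1_deriv x)).
apply: (ae_eq_of_integral_itv_abs_eq0 mu1 mu2) => a b.
apply: (L1_itv_limit_unique mu1 mu2 v1_meas (v1_u1 a b)).
apply: cvg_trans (v2_u2 a b); apply: near_eq_cvg; near=> e.
by rewrite (near v12 e).
Unshelve. all: by end_near. Qed.
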